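(* For every $\lambda>\lambda^*$, $\dfrac{G(e(\lambda))}{\lambda}<\dfrac{1}{a^*}$, where $a^*=\max_{1\le i\le p}a_i$.
   Context: Standing setup. Let $\gamma>0$; let $a_1,\dots,a_p>0$ with weights $\omega_i>0$, $\sum_i\omega_i=1$, and $b_1,\dots,b_n>0$ with weights $\pi_j>0$, $\sum_j\pi_j=1$. Let $\mu$ be the limiting spectral distribution of $\mathbf{N}\mathbf{N}^T$ where $\mathbf{N}=\mathbf{A}^{1/2}\mathbf{G}\mathbf{B}^{1/2}$ is $k\times l$, $\mathbf{G}$ has iid mean-zero entries of variance $1/l$, $k/l\to\gamma$, and the spectral distributions of $\mathbf{A},\mathbf{B}$ converge to $\nu=\sum_i\omega_i\delta_{a_i}$ and $\underline{\nu}=\sum_j\pi_j\delta_{b_j}$. $\mu$ is a compactly supported probability measure on $[0,\infty)$; $\lambda^*>0$ is the right endpoint of its support, and $s(\lambda)=\int\frac{d\mu(t)}{t-\lambda}$ for $\lambda>\lambda^*$. Define $G(e)=\sum_{j=1}^n\frac{b_j\pi_j}{1+\gamma b_j e}$. It is known (master equations) that there is a continuous (indeed smooth) real function $e(\lambda)$ on $(\lambda^*,\infty)$, never equal to a pole $-1/(\gamma b_j)$ of $G$ and with $a_iG(e(\lambda))\ne\lambda$ for all $i$, satisfying $s(\lambda)=\sum_{i=1}^p\frac{\omega_i}{a_iG(e(\lambda))-\lambda}$ and $e(\lambda)=\sum_{i=1}^p\frac{a_i\omega_i}{a_iG(e(\lambda))-\lambda}$. *)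

From Stdlib Require Import Reals Lra Lia.
Open Scope R_scope.

Fixpoint sumR (n : nat) (f : nat -> R) : R :=
  match n with
  | O => 0
  | S m => sumR m f + f m
  end.

(* maxR n f = max_{i<n} f i  (for n >= 1 and f > 0; returns 0 when n = 0) *)
Fixpoint maxR (n : nat) (f : nat -> R) : R :=
  match n with
  | O => 0
  | S m => Rmax (maxR m f) (f m)
  end.

Definition Gfun (gamma : R) (n : nat) (b pi : nat -> R) (e : R) : R :=
  sumR n (fun j => b j * pi j / (1 + gamma * b j * e)).

(* A compactly supported Borel probability measure mu with supp mu ⊆ [lo,hi],
   represented (Riesz) by its integration functional I f = ∫ f dmu,
   specified on functions continuous at every point of [lo,hi]. *)
Definition cont_on (lo hi : R) (f : R -> R) : Prop :=
  forall t, lo <= t <= hi -> continuity_pt f t.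

Definition prob_functional (I : (R -> R) -> R) (lo hi : R) : Prop :=
  (forall f g, cont_on lo hi f -> cont_on lo hi g ->
     I (fun t => f t + g t) = I f + I g) /\
  (forall c f, cont_on lo hi f -> I (fun t => c * f t) = c * I f) /\
  (forall f, cont_on lo hi f -> (forall t, lo <= t <= hi -> 0 <= f t) -> 0 <= I f) /\
  I (fun _ => 1) = 1.

(* hi is in the support: mu((hi - eps, hi]) > 0 for every eps > 0,
   expressed via the continuous test function max(0, t - (hi - eps)). *)
Definition right_endpoint_in_support (I : (R -> R) -> R) (hi : R) : Prop :=
  forall eps, 0 < eps -> 0 < I (fun t => Rmax 0 (t - (hi - eps))).

Definition stieltjes (I : (R -> R) -> R) (lam : R) : R :=
  I (fun t => / (t - lam)).

From Stdlib Require Import Reals Ranalysis5 Lra Lia.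
Open Scope R_scope.

(** Multiplying the two master equations gives [e G = 1 + λ s(λ)], and the
    support bound [s(λ) >= -1/(λ - lamstar)] turns this into
    [e G (λ - lamstar) >= -lamstar].  Were [a G(e(λ)) > λ] with [a] the largest
    [a_i], then [G > 0] and [e] could only be negative of size [O(1/λ²)], so
    every denominator [1 + γ b_j e] of [G] would exceed 1/2 and [G] would stay
    bounded: impossible for large [λ].  Hence [a G(e(λ)) < λ] for large [λ];
    since [a G(e(λ)) <> λ] everywhere and [λ ↦ λ - a G(e(λ))] is continuous,
    the intermediate value theorem propagates the inequality to every
    [λ > lamstar]. *)

Lemma continuity_pt_cst (c x : R) : continuity_pt (fun _ => c) x.
Proof. apply continuity_pt_const. now intros ? ?. Qed.

Lemma continuity_pt_idR (x : R) : continuity_pt (fun y => y) x.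
Proof. exact (derivable_continuous_pt _ _ (derivable_pt_id x)). Qed.

Lemma sumR_ext n (F G : nat -> R) :
  (forall j, (j < n)%nat -> F j = G j) -> sumR n F = sumR n G.
Proof.
  induction n as [|m IH]; intros H; simpl; auto.
  rewrite IH by (intros; apply H; lia). rewrite H by lia. reflexivity.
Qed.

Lemma sumR_add n (F G : nat -> R) :
  sumR n (fun j => F j + G j) = sumR n F + sumR n G.
Proof. induction n as [|m IH]; simpl; [lra | rewrite IH; lra]. Qed.

Lemma sumR_scal n c (F : nat -> R) :
  sumR n (fun j => c * F j) = c * sumR n F.
Proof. induction n as [|m IH]; simpl; [lra | rewrite IH; lra]. Qed.

Lemma sumR_le n (F G : nat -> R) :
  (forall j, (j < n)%nat -> F j <= G j) -> sumR n F <= sumR n G.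
Proof.
  induction n as [|m IH]; intros H; simpl; [lra|].
  assert (IHm := IH (fun j Hj => H j ltac:(lia))).
  assert (Hm := H m ltac:(lia)). lra.
Qed.

Lemma sumR_ge0 n (F : nat -> R) :
  (forall j, (j < n)%nat -> 0 <= F j) -> 0 <= sumR n F.
Proof.
  intros H. replace 0 with (sumR n (fun _ => 0)) by (clear; induction n; simpl; lra).
  now apply sumR_le.
Qed.

Lemma sumR_ge_term n (F : nat -> R) k :
  (forall j, (j < n)%nat -> 0 <= F j) -> (k < n)%nat -> F k <= sumR n F.
Proof.
  induction n as [|m IH]; intros H Hk; simpl; [lia|].
  assert (Hrest : 0 <= sumR m F) by (apply sumR_ge0; intros; apply H; lia).
  destruct (Nat.eq_dec k m) as [->|Hne]; [lra|].
  assert (IHm := IH (fun j Hj => H j ltac:(lia)) ltac:(lia)).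
  assert (Hm := H m ltac:(lia)). lra.
Qed.

Lemma continuity_pt_sumR n (F : nat -> R -> R) x :
  (forall j, (j < n)%nat -> continuity_pt (F j) x) ->
  continuity_pt (fun y => sumR n (fun j => F j y)) x.
Proof.
  induction n as [|m IH]; intros H; simpl.
  - apply continuity_pt_cst.
  - apply (continuity_pt_plus (fun y => sumR m (fun j => F j y)) (F m)).
    + apply IH; intros; apply H; lia.
    + apply H; lia.
Qed.

Lemma maxR_attained p (a : nat -> R) :
  (forall i, (i < p)%nat -> 0 < a i) ->
  (0 < p)%nat -> exists k, (k < p)%nat /\ maxR p a = a k.
Proof.
  induction p as [|m IH]; intros Ha Hp; [lia|].
  simpl. destruct m as [|m'].
  - exists 0%nat. split; [lia|]. simpl. apply Rmax_right.
    assert (H0 := Ha 0%nat ltac:(lia)). lra.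
  - destruct (IH (fun i Hi => Ha i ltac:(lia)) ltac:(lia)) as [k [Hk ->]].
    unfold Rmax. destruct (Rle_dec (a k) (a (S m'))).
    + exists (S m'); split; auto.
    + exists k; split; auto.
Qed.

Lemma pos_of_nonvanishing (f : R -> R) (lo x y : R) :
  (forall t, lo < t -> continuity_pt f t) ->
  (forall t, lo < t -> f t <> 0) ->
  lo < x -> lo < y -> 0 < f y -> 0 < f x.
Proof.
  intros Hcont Hnz Hx Hy Hfy.
  destruct (Rlt_le_dec 0 (f x)) as [Hfx|Hfx]; [exact Hfx | exfalso].
  assert (Hfx' : f x < 0) by (destruct Hfx; [lra | exfalso; now apply (Hnz x)]).
  destruct (Rtotal_order x y) as [Hxy|[<-|Hyx]]; [| lra |].
  - destruct (IVT_interv f x y) as [z [Hz Hfz]]; auto.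
    + intros t Ht. apply Hcont. lra.
    + apply (Hnz z); [lra | exact Hfz].
  - destruct (IVT_interv (fun t => - f t) y x) as [z [Hz Hfz]]; auto; try lra.
    + intros t Ht. apply continuity_pt_opp, Hcont. lra.
    + apply (Hnz z); lra.
Qed.

Lemma stieltjes_ge (I : (R -> R) -> R) lo hi x :
  prob_functional I lo hi -> hi < x -> - / (x - hi) <= stieltjes I x.
Proof.
  intros [Hadd [Hscal [Hpos Hmass]]] Hx. set (c := / (x - hi)).
  assert (Hconst : forall k, cont_on lo hi (fun _ => k)).
  { intros k t _. apply continuity_pt_cst. }
  assert (Hcauchy : cont_on lo hi (fun t => / (t - x))).
  { intros t Ht. apply continuity_pt_inv; [|lra].
    apply continuity_pt_minus; [apply continuity_pt_idR | apply Hconst; lra]. }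
  assert (Hshift : 0 <= I (fun t => / (t - x) + c * 1)).
  { apply Hpos.
    - intros t Ht. apply continuity_pt_plus; [now apply Hcauchy | now apply Hconst].
    - intros t Ht. replace (/ (t - x)) with (- / (x - t)) by (field; lra).
      assert (/ (x - t) <= c) by (apply Rinv_le_contravar; lra). lra. }
  rewrite (Hadd _ _ Hcauchy (Hconst (c * 1))), (Hscal c _ (Hconst 1)), Hmass in Hshift.
  unfold stieltjes. lra.
Qed.

Lemma master_product (p : nat) (a w : nat -> R) (g l : R) :
  sumR p w = 1 -> (forall i, (i < p)%nat -> a i * g <> l) ->
  sumR p (fun i => a i * w i / (a i * g - l)) * g
  = 1 + l * sumR p (fun i => w i / (a i * g - l)).
Proof.
  intros Hw Hne.
  rewrite Rmult_comm, <- sumR_scal, <- Hw, <- sumR_scal, <- sumR_add.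
  apply sumR_ext. intros i Hi.
  assert (a i * g - l <> 0) by (specialize (Hne i Hi); lra).
  field; auto.
Qed.

Lemma Gfun_denominator_neq0 gamma b e :
  0 < gamma -> 0 < b -> e <> - / (gamma * b) -> 1 + gamma * b * e <> 0.
Proof.
  intros Hg Hb Hpole H0. apply Hpole.
  apply (Rmult_eq_reg_l (gamma * b)); [|nra].
  rewrite <- Ropp_mult_distr_r, Rinv_r by nra. lra.
Qed.

Lemma continuity_pt_Gfun_comp gamma n b pi (e : R -> R) x :
  continuity_pt e x -> (forall j, (j < n)%nat -> 1 + gamma * b j * e x <> 0) ->
  continuity_pt (fun y => Gfun gamma n b pi (e y)) x.
Proof.
  intros He Hden. unfold Gfun.
  apply (continuity_pt_sumR n (fun j y => b j * pi j / (1 + gamma * b j * e y))).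
  intros j Hj.
  apply (continuity_pt_div (fun _ => b j * pi j) (fun y => 1 + gamma * b j * e y));
    [apply continuity_pt_cst | | now apply Hden].
  apply (continuity_pt_plus (fun _ => 1) (fun y => gamma * b j * e y));
    [apply continuity_pt_cst |].
  apply (continuity_pt_mult (fun _ => gamma * b j) e); [|exact He].
  apply continuity_pt_cst.
Qed.

Lemma Gfun_le_of_denominators gamma n b pi e c :
  0 < c -> (forall j, (j < n)%nat -> 0 <= b j * pi j) ->
  (forall j, (j < n)%nat -> c <= 1 + gamma * b j * e) ->
  Gfun gamma n b pi e <= sumR n (fun j => b j * pi j) / c.
Proof.
  intros Hc Hnum Hden. unfold Gfun, Rdiv.
  rewrite Rmult_comm, <- sumR_scal. apply sumR_le. intros j Hj.
  specialize (Hnum j Hj). specialize (Hden j Hj).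
  rewrite (Rmult_comm (/ c)).
  apply Rmult_le_compat_l; [exact Hnum|]. apply Rinv_le_contravar; lra.
Qed.

Lemma neg_part_small (lamstar x a g e : R) :
  0 < lamstar < x -> 0 < a -> x < a * g -> - lamstar <= e * g * (x - lamstar) ->
  - e * (x * (x - lamstar)) <= a * lamstar.
Proof.
  intros Hx Ha Hag Hlow.
  assert (Hxx : 0 < x * (x - lamstar)) by nra.
  destruct (Rle_lt_dec 0 e) as [Hep|Hen]; [nra|].
  assert (Hd : 0 < - e * (x - lamstar)) by nra.
  assert (- e * (x - lamstar) * x <= - e * (x - lamstar) * (a * g)) by nra.
  nra.
Qed.

Lemma denominator_ge_half (gamma b Bs e X K : R) :
  0 < gamma -> 0 < b <= Bs -> 0 <= K -> - e * X <= K -> 2 * (gamma * Bs * K) + 1 <= X ->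
  / 2 <= 1 + gamma * b * e.
Proof.
  intros Hg Hb HK HeX HX.
  assert (0 <= gamma * Bs * K) by (apply Rmult_le_pos; nra).
  destruct (Rle_lt_dec 0 e) as [Hep|Hen].
  - assert (0 <= gamma * b * e) by (apply Rmult_le_pos; nra). lra.
  - assert (Hterm : gamma * b * (- e * X) <= gamma * Bs * K).
    { apply Rle_trans with (gamma * b * K); [apply Rmult_le_compat_l; nra|].
      apply Rmult_le_compat_r; nra. }
    assert (Hy : gamma * b * (- e) * X <= / 2 * X) by lra.
    apply Rmult_le_reg_r in Hy; lra.
Qed.

Lemma lt_inv_of_mul_lt a g l : 0 < a -> 0 < l -> a * g < l -> g / l < / a.
Proof.
  intros Ha Hl Hag. apply (Rmult_lt_reg_l (a * l)); [nra|].
  replace (a * l * (g / l)) with (a * g) by (field; lra).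
  replace (a * l * / a) with l by (field; lra). exact Hag.
Qed.

Section MasterEquations.

Variables (gamma : R) (p n : nat) (a w b pi : nat -> R).
Variables (I : (R -> R) -> R) (lamstar : R) (e : R -> R).

Hypothesis gamma_gt0 : 0 < gamma.
Hypothesis a_gt0 : forall i, (i < p)%nat -> 0 < a i.
Hypothesis w_sum1 : sumR p w = 1.
Hypothesis b_gt0 : forall j, (j < n)%nat -> 0 < b j.
Hypothesis pi_gt0 : forall j, (j < n)%nat -> 0 < pi j.
Hypothesis lamstar_gt0 : 0 < lamstar.
Hypothesis I_prob : prob_functional I 0 lamstar.
Hypothesis e_cont : forall l, lamstar < l -> continuity_pt e l.
Hypothesis e_not_pole :
  forall l, lamstar < l -> forall j, (j < n)%nat -> e l <> - / (gamma * b j).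
Hypothesis aG_neq :
  forall l, lamstar < l -> forall i, (i < p)%nat -> a i * Gfun gamma n b pi (e l) <> l.
Hypothesis s_master : forall l, lamstar < l ->
  stieltjes I l = sumR p (fun i => w i / (a i * Gfun gamma n b pi (e l) - l)).
Hypothesis e_master : forall l, lamstar < l ->
  e l = sumR p (fun i => a i * w i / (a i * Gfun gamma n b pi (e l) - l)).

Let G (x : R) : R := Gfun gamma n b pi (e x).

Lemma G_continuous x : lamstar < x -> continuity_pt G x.
Proof.
  intros Hx. apply continuity_pt_Gfun_comp; [now apply e_cont|].
  intros j Hj. apply Gfun_denominator_neq0; auto.
Qed.

Lemma eG_lower_bound x : lamstar < x -> - lamstar <= e x * G x * (x - lamstar).
Proof.
  intros Hx.
  assert (Hprod : e x * G x = 1 + x * stieltjes I x).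
  { rewrite (s_master x Hx), (e_master x Hx) at 1.
    apply master_product; [exact w_sum1 | now apply aG_neq]. }
  assert (Hs := stieltjes_ge I 0 lamstar x I_prob Hx).
  assert (Hinv : / (x - lamstar) * (x - lamstar) = 1) by (field; lra).
  assert (0 <= x * (x - lamstar) * (stieltjes I x + / (x - lamstar)))
    by (apply Rmult_le_pos; nra).
  rewrite Hprod. nra.
Qed.

Lemma aG_lt_eventually k : (k < p)%nat ->
  exists L, lamstar < L /\ a k * G L < L.
Proof.
  intros Hk. assert (Hak := a_gt0 k Hk).
  set (B := sumR n (fun j => b j * pi j)).
  set (Bs := sumR n b).
  assert (HB : 0 <= B).
  { apply sumR_ge0. intros j Hj. specialize (b_gt0 j Hj). specialize (pi_gt0 j Hj). nra. }
  assert (Hb_le : forall j, (j < n)%nat -> b j <= Bs).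
  { intros j Hj. apply sumR_ge_term; auto. intros i Hi. specialize (b_gt0 i Hi). lra. }
  assert (HBs : 0 <= Bs) by (apply sumR_ge0; intros j Hj; specialize (b_gt0 j Hj); lra).
  set (M := gamma * Bs * (a k * lamstar)).
  assert (HM : 0 <= M) by (unfold M; apply Rmult_le_pos; nra).
  set (L := lamstar + 1 + 2 * M + 2 * a k * B + 1).
  assert (HaB : 0 <= a k * B) by nra.
  exists L. split; [unfold L; lra|].
  destruct (Rlt_le_dec (a k * G L) L) as [Hlt|Hge]; [exact Hlt|exfalso].
  assert (HL : lamstar < L) by (unfold L; lra).
  assert (Hgt : L < a k * G L).
  { destruct Hge as [Hgt|Heq]; [exact Hgt|]. exfalso.
    apply (aG_neq L HL k Hk). unfold G in Heq. lra. }
  assert (Hsmall := neg_part_small lamstar L (a k) (G L) (e L)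
                      ltac:(lra) Hak Hgt (eG_lower_bound L HL)).
  assert (Hgrowth : 2 * M + 1 <= L * (L - lamstar)) by (unfold L in *; nra).
  assert (Hden : forall j, (j < n)%nat -> / 2 <= 1 + gamma * b j * e L).
  { intros j Hj. apply (denominator_ge_half _ _ Bs _ (L * (L - lamstar)) (a k * lamstar));
      auto; nra. }
  assert (HGL : G L <= B / / 2).
  { apply Gfun_le_of_denominators; [lra | | exact Hden].
    intros j Hj. specialize (b_gt0 j Hj). specialize (pi_gt0 j Hj). nra. }
  replace (B / / 2) with (B * 2) in HGL by field.
  assert (a k * G L <= a k * (B * 2)) by (apply Rmult_le_compat_l; lra).
  unfold L in *. lra.
Qed.

Lemma aG_lt k : (k < p)%nat -> forall l, lamstar < l -> a k * G l < l.
Proof.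
  intros Hk l Hl.
  destruct (aG_lt_eventually k Hk) as [L [HL HaL]].
  enough (0 < l - a k * G l) by lra.
  apply (pos_of_nonvanishing (fun x => x - a k * G x) lamstar l L); auto; [| | lra].
  - intros x Hx. apply continuity_pt_minus; [apply continuity_pt_idR|].
    apply (continuity_pt_mult (fun _ => a k) G); [apply continuity_pt_cst|].
    now apply G_continuous.
  - intros x Hx H0. apply (aG_neq x Hx k Hk). unfold G in H0. lra.
Qed.

End MasterEquations.

Theorem lemma3p6
  (gamma : R) (p n : nat) (a w b pi : nat -> R)
  (I : (R -> R) -> R) (lamstar : R) (e : R -> R) :
  0 < gamma ->
  (forall i, (i < p)%nat -> 0 < a i) ->
  (forall i, (i < p)%nat -> 0 < w i) ->
  sumR p w = 1 ->
  (forall j, (j < n)%nat -> 0 < b j) ->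
  (forall j, (j < n)%nat -> 0 < pi j) ->
  sumR n pi = 1 ->
  0 < lamstar ->
  prob_functional I 0 lamstar ->
  right_endpoint_in_support I lamstar ->
  (forall l, lamstar < l -> continuity_pt e l) ->
  (forall l, lamstar < l -> forall j, (j < n)%nat -> e l <> - / (gamma * b j)) ->
  (forall l, lamstar < l -> forall i, (i < p)%nat ->
       a i * Gfun gamma n b pi (e l) <> l) ->
  (forall l, lamstar < l ->
       stieltjes I l = sumR p (fun i => w i / (a i * Gfun gamma n b pi (e l) - l))) ->
  (forall l, lamstar < l ->
       e l = sumR p (fun i => a i * w i / (a i * Gfun gamma n b pi (e l) - l))) ->
  forall l, lamstar < l -> Gfun gamma n b pi (e l) / l < / maxR p a.
Proof.
  intros Hg Ha _ Hw Hb Hpi _ Hls HI _ Hce Hpole Hneq Hs He l Hl.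
  assert (Hp : (0 < p)%nat) by (destruct p; [simpl in Hw; lra | lia]).
  destruct (maxR_attained p a Ha Hp) as [k [Hk ->]].
  apply lt_inv_of_mul_lt; [now apply Ha | lra |].
  exact (aG_lt gamma p n a w b pi I lamstar e Hg Ha Hw Hb Hpi Hls HI Hce Hpole Hneq Hs He
           k Hk l Hl).
Qed.
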